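(* Let $N$ and $T$ be integers with $0\le T \le N$, and let $F(T) = T + \lfloor T^2/4\rfloor + 1$. Let $\mathcal{G}=(\mathcal{V},\mathcal{E})$ be a finite undirected graph (self-loops allowed) with $N-T \le |\mathcal{V}| \le N$ in which every vertex has a self-loop. Let $V'$ be the set of vertices contained in a clique of size at least $N-T$, and suppose $V'\ne\emptyset$. Let $$V^* = \{v\in V' : (v,\tilde v)\in\mathcal{E}\ \text{for all } \tilde v \in V'\}.$$ Then $|V^*| \ge N - F(T)$.
   Context: A clique is a set of distinct vertices that are pairwise joined by edges. *)

From mathcomp Require Import all_boot.
Set Implicit Arguments. Unset Strict Implicit. Unset Printing Implicit Defensive.

Definition Fbound (T : nat) : nat := T + (T * T) %/ 4 + 1.

Definition is_clique (V : finType) (e : rel V) (K : {set V}) : bool :=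
  [forall x in K, forall y in K, (x != y) ==> e x y].

Definition Vprime (V : finType) (e : rel V) (m : nat) : {set V} :=
  [set v | [exists K : {set V}, [&& v \in K, is_clique e K & m <= #|K|]]].

Definition Vstar (V : finType) (e : rel V) (m : nat) : {set V} :=
  [set v in Vprime e m | [forall w in Vprime e m, e v w]].

From mathcomp Require Import all_boot zify.
Set Implicit Arguments. Unset Strict Implicit. Unset Printing Implicit Defensive.

(* Take a maximum clique K (of size k = m + d, where m = N - T) and let
   W = V' \ K.  Every w in W lies in a clique C_w of size at least m.  A vertex
   of K lying in every C_w is adjacent to all of V', so it suffices to bound
   the number of vertices of K missed by some C_w.  Adding the cliques one at a
   time, the maximality of K shows that each new clique misses at most d new
   vertices of K, plus one for each vertex of C_w \ K not met before; hence at
   most |W| d + |W| vertices of K are missed.  Since |W| + d <= T, AM-GM bounds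
   this by d + T^2/4 + 1. *)

Lemma leq_mul_quarter_sq (a b : nat) : a * b <= (a + b) * (a + b) %/ 4.
Proof.
rewrite leq_divRL //; case: (leqP a b) => ab.
- by rewrite -(subnKC ab); nia.
- by rewrite -(subnKC (ltnW ab)); nia.
Qed.

Lemma mulnS_leq_Fbound (a d T : nat) : a + d <= T -> a * d.+1 <= d + (T * T) %/ 4 + 1.
Proof.
case: a => [|b] bdT; first by lia.
have : (b + d.+1) * (b + d.+1) %/ 4 <= T * T %/ 4 by apply/leq_div2r/leq_mul; lia.
by have := leq_mul_quarter_sq b d.+1; lia.
Qed.

Definition large_clique (V : finType) (e : rel V) (m : nat) (C : {set V}) : bool :=
  is_clique e C && (m <= #|C|).

Section MaximumClique.

Variables (V : finType) (e : rel V).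
Hypotheses (e_sym : symmetric e) (e_refl : reflexive e).

Lemma cliqueP (C : {set V}) : reflect {in C &, forall x y, e x y} (is_clique e C).
Proof.
apply: (iffP forall_inP) => [cC x y xC yC | cC x xC].
- have [<-|nxy] := eqVneq x y; first exact: e_refl.
  by move/forall_inP/(_ y yC)/implyP: (cC x xC); apply.
- by apply/forall_inP => y yC; apply/implyP => _; apply: cC.
Qed.

Lemma clique_edge (C : {set V}) (x y : V) : is_clique e C -> x \in C -> y \in C -> e x y.
Proof. by move/cliqueP; apply. Qed.

Lemma large_clique_sub_Vprime (m : nat) (C : {set V}) :
  large_clique e m C -> C \subset Vprime e m.
Proof.
move=> /andP [cC mC]; apply/subsetP => x xC.
by rewrite inE; apply/existsP; exists C; rewrite xC cC mC.
Qed.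

Lemma large_clique_cover (m : nat) (A : {set V}) :
  A \subset Vprime e m ->
  exists2 s : seq {set V}, size s = #|A| &
    all (large_clique e m) s /\ A \subset \bigcup_(C <- s) C.
Proof.
rewrite cardE => /subsetP AV.
have : {subset enum A <= Vprime e m} by move=> x; rewrite mem_enum; apply: AV.
suff cover ws : {subset ws <= Vprime e m} -> exists2 s : seq {set V}, size s = size ws &
    all (large_clique e m) s /\ {subset ws <= \bigcup_(C <- s) C}.
  case/cover => s size_s [large_s A_s]; exists s => //; split => //.
  by apply/subsetP => x xA; apply: A_s; rewrite mem_enum.
elim: ws => [|w ws IH] ws_V; first by exists [::]; split => // x.
have [|s size_s [large_s ws_s]] := IH.
  by move=> x x_ws; apply: ws_V; rewrite inE x_ws orbT.
have := ws_V w (mem_head _ _); rewrite inE => /existsP [C /andP [wC large_C]].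
exists (C :: s); rewrite /= ?size_s //; split; first exact/andP.
move=> x; rewrite inE big_cons in_setU => /orP [/eqP -> | /ws_s ->].
  by rewrite wC.
by rewrite orbT.
Qed.

Variable K : {set V}.

Lemma bigcup_setD_sub_Vprime (m : nat) (s : seq {set V}) :
  all (large_clique e m) s -> \bigcup_(C <- s) (C :\: K) \subset Vprime e m :\: K.
Proof.
move=> /allP large_s; rewrite bigcup_seq; apply/bigcupsP => C Cs.
exact/setSD/large_clique_sub_Vprime/large_s.
Qed.

Hypothesis K_clique : is_clique e K.

Lemma bigcup_outside_adj (m : nat) (s : seq {set V}) :
  all (large_clique e m) s ->
  {in \bigcup_(C <- s) (C :\: K) & K :\: \bigcup_(C <- s) (K :\: C), forall p q, e p q}.
Proof.
move=> /allP large_s p q; rewrite bigcup_seq => /bigcupP [C Cs].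
rewrite !inE => /andP [_ pC] /andP [qU qK].
have /andP [cC _] := large_s C Cs.
apply: (clique_edge cC) => //; apply: contraNT qU => qC.
by rewrite bigcup_seq; apply/bigcupP; exists C; rewrite // !inE qC qK.
Qed.

Lemma clique_minus_missed_sub_Vstar (m : nat) (s : seq {set V}) :
  m <= #|K| -> all (large_clique e m) s ->
  Vprime e m :\: K \subset \bigcup_(C <- s) C ->
  K :\: \bigcup_(C <- s) (K :\: C) \subset Vstar e m.
Proof.
move=> mK /allP large_s /subsetP cover.
apply/subsetP => v; rewrite inE => /andP [vU vK].
have vV : v \in Vprime e m.
  by apply: (subsetP (large_clique_sub_Vprime _)) vK; rewrite /large_clique K_clique.
rewrite inE vV; apply/forall_inP => w wV.
have [wK|wK] := boolP (w \in K); first exact: (clique_edge K_clique).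
have : w \in \bigcup_(C <- s) C by apply: cover; rewrite inE wK.
rewrite bigcup_seq => /bigcupP [C Cs wC].
have /andP [cC _] := large_s C Cs.
apply: (clique_edge cC) => //; apply: contraNT vU => vC.
by rewrite bigcup_seq; apply/bigcupP; exists C; rewrite // !inE vC vK.
Qed.

Hypothesis K_max : forall C : {set V}, is_clique e C -> #|C| <= #|K|.

(* ((C :\: K) :&: Y) :|: (K :\: (K :\: C) :&: Z) is a clique, so the maximality of K
   bounds #|(C :\: K) :&: Y| by #|(K :\: C) :&: Z|. *)
Lemma maxclique_exchange (m : nat) (C Y Z : {set V}) :
  is_clique e C -> m <= #|C| -> {in Y & K :\: Z, forall p q, e p q} ->
  #|(K :\: C) :\: Z| + m <= #|K| + #|(C :\: K) :\: Y|.
Proof.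
move=> cC mC YZ_adj.
set P := (C :\: K) :&: Y; set X := (K :\: C) :&: Z.
have P_adj : {in P & K :\: X, forall p q, e p q}.
  move=> p q; rewrite !inE => /andP [/andP [_ pC] pY] /andP [qX qK].
  have [qC|qC] := boolP (q \in C); first exact: (clique_edge cC).
  apply: YZ_adj; rewrite // !inE qK andbT.
  by apply: contra qX => qZ; rewrite qC qK qZ.
have : is_clique e (P :|: (K :\: X)).
  apply/cliqueP => x y; rewrite !in_setU.
  have [xP|xP] := boolP (x \in P); have [yP|yP] := boolP (y \in P) => //= xKX yKX.
  - move: xP yP; rewrite !inE => /andP [/andP [_ xC] _] /andP [/andP [_ yC] _].
    exact: (clique_edge cC).
  - exact: P_adj.
  - by rewrite e_sym; apply: P_adj.
  - move: xKX yKX; rewrite !inE => /andP [_ xK] /andP [_ yK].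
    exact: (clique_edge K_clique).
move/K_max; rewrite cardsU.
have -> : P :&: (K :\: X) = set0.
  by apply/setP => x; rewrite !inE; case: (x \in K); rewrite ?andbF.
have XK : K :&: X = X.
  by apply/setIidPr/subsetP => x; rewrite !inE => /andP [/andP [_ ->]].
have := cardsID X K; have := cardsID Z (K :\: C); have := cardsID C K.
have := cardsID K C; have := cardsID Y (C :\: K).
rewrite cards0 (setIC C K) XK /P /X; lia.
Qed.

Lemma missed_count (m : nat) (s : seq {set V}) :
  all (large_clique e m) s ->
  #|\bigcup_(C <- s) (K :\: C)| + size s * m
    <= size s * #|K| + #|\bigcup_(C <- s) (C :\: K)|.
Proof.
elim: s => [|C s IH] /=; first by rewrite !big_nil !cards0.
case/andP => /andP [cC mC] large_s.
have := maxclique_exchange cC mC (bigcup_outside_adj large_s).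
have := IH large_s; rewrite !big_cons !mulSn.
set Z := \bigcup_(C <- s) (K :\: C); set Y := \bigcup_(C <- s) (C :\: K).
have := cardsU (K :\: C) Z; have := cardsID Z (K :\: C).
have := cardsU (C :\: K) Y; have := cardsID Y (C :\: K); have := cardsID (C :\: K) Y.
rewrite (setIC Y); lia.
Qed.

End MaximumClique.

Theorem mainTheorem6 (N T : nat) (V : finType) (e : rel V)
  (hTN : T <= N)
  (hsym : symmetric e) (hloop : reflexive e)
  (hV : N - T <= #|V| <= N)
  (hV' : Vprime e (N - T) != set0) :
  N - Fbound T <= #|Vstar e (N - T)|.
Proof.
have [m m_def] : {m | m = N - T} by exists (N - T).
rewrite -m_def in hV' *.
have [v0] := set0Pn _ hV'; rewrite inE => /existsP [K0 /and3P [_ cK0 mK0]].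
have [K cK K_max] := arg_maxnP (fun K : {set V} => #|K|) cK0.
have mK : m <= #|K| := leq_trans mK0 (K_max _ cK0).
set W := Vprime e m :\: K.
have [s size_s [large_s cover]] := @large_clique_cover _ e m W (subsetDl _ _).
have count := missed_count hsym hloop cK K_max large_s; rewrite size_s in count.
have Y_W : #|\bigcup_(C <- s) (C :\: K)| <= #|W|.
  exact/subset_leq_card/bigcup_setD_sub_Vprime.
have KU := subset_leq_card (clique_minus_missed_sub_Vstar hloop cK mK large_s cover).
have W_K : #|W| + #|K| <= N.
  have : #|W| <= #|~: K| by rewrite /W setDE; exact/subset_leq_card/subsetIr.
  by have := cardsC K; case/andP: hV; lia.
have := cardsID (\bigcup_(C <- s) (K :\: C)) K.
have : #|K :&: \bigcup_(C <- s) (K :\: C)| <= #|\bigcup_(C <- s) (K :\: C)|.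
  exact/subset_leq_card/subsetIr.
have := @mulnS_leq_Fbound #|W| (#|K| - m) T; rewrite mulnS.
have : #|W| * #|K| = #|W| * m + #|W| * (#|K| - m) by rewrite -mulnDr subnKC.
by rewrite /Fbound; lia.
Qed.
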